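(* Let $(S,H)$ be a Brill–Noether general K3 surface of degree $10$ ($H$ very ample, $H^2=10$), and let $(\omega,\beta)$ range over pairs of classes in $\mathrm{NS}(S)_{\mathbb Q}$ with $\omega$ ample. Then the equation $$Z_{\omega,\beta}(r,\Delta,s)=Z_{\omega,\beta}(-4r-5s-2\Delta\cdot H,\ (2r+2s+\Delta\cdot H)H-\Delta,\ -5r-4s-2\Delta\cdot H)$$ holds for all $(r,\Delta,s)\in N(S)$ if and only if $\omega=\tfrac15H$ and $\beta=-\tfrac25H$; and the equation $$Z_{\omega,\beta}(r,\Delta,s)=Z_{\omega,\beta}(-9r-5s-3\Delta\cdot H,\ (6r+3s+2\Delta\cdot H)H-\Delta,\ -20r-9s-6\Delta\cdot H)$$ holds for all $(r,\Delta,s)\in N(S)$ if and only if $\omega=\tfrac15H$ and $\beta=-\tfrac35H$.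
   Context: $N(S)=H^0(S,\mathbb Z)\oplus\mathrm{NS}(S)\oplus H^4(S,\mathbb Z)$ with elements $(r,\Delta,s)$, and $Z_{\omega,\beta}(r,\Delta,s)=\tfrac12(2\beta\cdot\Delta-2s+r(\omega^2-\beta^2))+\sqrt{-1}(\Delta-r\beta)\cdot\omega$. *)

From HB Require Import structures.
From mathcomp Require Import all_boot all_order all_algebra.
Set Implicit Arguments. Unset Strict Implicit. Unset Printing Implicit Defensive.
Import Order.TTheory GRing.Theory Num.Theory.
Local Open Scope ring_scope.

(* Lattice model of NS(S): NS(S) = Z^n with integral Gram matrix G of the
   intersection form; NS(S)_Q = Q^n.  Row vectors. *)

Definition toQ n (v : 'rV[int]_n) : 'rV[rat]_n := map_mx (fun z : int => z%:~R) v.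

Definition qform n (G : 'M[int]_n) (x y : 'rV[rat]_n) : rat :=
  (x *m map_mx (fun z : int => z%:~R) G *m y^T) 0 0.

Definition iform n (G : 'M[int]_n) (x y : 'rV[int]_n) : int :=
  (x *m G *m y^T) 0 0.

(* Z_{omega,beta}(r,Delta,s) as the pair (real part, imaginary part):
   1/2(2 beta.Delta - 2s + r(omega^2 - beta^2)) + i (Delta - r beta).omega *)
Definition Zc n (G : 'M[int]_n) (om be : 'rV[rat]_n)
    (r : int) (D : 'rV[int]_n) (s : int) : rat * rat :=
  ((2 * qform G be (toQ D) - 2 * s%:~R + r%:~R * (qform G om om - qform G be be)) / 2,
   qform G (toQ D - r%:~R *: be) om).

(* An abstract "ample" predicate on NS(S)_Q, subject to properties that
   the ample cone of (S,H) satisfies: H is ample, and every ample class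
   omega has omega^2 > 0 and omega.H > 0. *)
Definition ample_axioms n (G : 'M[int]_n) (H : 'rV[int]_n)
    (ample : 'rV[rat]_n -> Prop) : Prop :=
  ample (toQ H) /\
  (forall om, ample om -> 0 < qform G om om /\ 0 < qform G om (toQ H)).

Definition K3_NS_data n (G : 'M[int]_n) (H : 'rV[int]_n) : Prop :=
  G^T = G /\ (forall i, (2 %| G i i)%Z) /\ \det G != 0 /\ iform G H H = 10.

From HB Require Import structures.
From mathcomp Require Import all_boot all_order all_algebra.
From mathcomp Require Import ring lra.

(* Invariance at the classes (0, D, 0) says that the linear forms D |-> D.om
   and D |-> D.be are rational multiples of D |-> D.H, so by nondegeneracy of
   the intersection form om and be lie on the line QH.  On that line
   Z_{om,be}(r, D, s) only depends on (r, D.H, s).  At (0, 0, 1) the imaginary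
   part of the identity forces be (because om.H > 0), and then the real part
   forces om^2, hence om.  Conversely, for these om and be the identity is a
   polynomial identity in r, s and D.H. *)

Set Implicit Arguments.
Unset Strict Implicit.
Unset Printing Implicit Defensive.

Import Order.TTheory GRing.Theory Num.Theory.
Local Open Scope ring_scope.

Section IntersectionForm.
Variables (n : nat) (G : 'M[int]_n).
Hypothesis G_sym : G^T = G.

Lemma toQD (x y : 'rV[int]_n) : toQ (x + y) = toQ x + toQ y.
Proof. exact: map_mxD. Qed.

Lemma toQN (x : 'rV[int]_n) : toQ (- x) = - toQ x.
Proof. exact: map_mxN. Qed.

Lemma toQZ (k : int) (x : 'rV[int]_n) : toQ (k *: x) = k%:~R *: toQ x.
Proof. by apply/matrixP => i j; rewrite !mxE intrM. Qed.

Lemma qformDl (x y z : 'rV[rat]_n) : qform G (x + y) z = qform G x z + qform G y z.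
Proof. by rewrite /qform !mulmxDl !mxE. Qed.

Lemma qformNl (x z : 'rV[rat]_n) : qform G (- x) z = - qform G x z.
Proof. by rewrite /qform !mulNmx !mxE. Qed.

Lemma qformZl (a : rat) (x z : 'rV[rat]_n) : qform G (a *: x) z = a * qform G x z.
Proof. by rewrite /qform -!scalemxAl !mxE. Qed.

Lemma qformDr (x y z : 'rV[rat]_n) : qform G z (x + y) = qform G z x + qform G z y.
Proof. by rewrite /qform linearD /= mulmxDr !mxE. Qed.

Lemma qformNr (x z : 'rV[rat]_n) : qform G z (- x) = - qform G z x.
Proof. by rewrite /qform linearN /= mulmxN !mxE. Qed.

Lemma qformZr (a : rat) (x z : 'rV[rat]_n) : qform G z (a *: x) = a * qform G z x.
Proof. by rewrite /qform linearZ /= -!scalemxAr !mxE. Qed.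

Lemma qformC (x y : 'rV[rat]_n) : qform G x y = qform G y x.
Proof.
rewrite /qform; transitivity ((x *m map_mx intr G *m y^T)^T 0 0).
  by rewrite [RHS]mxE.
by rewrite !trmx_mul trmxK map_trmx G_sym mulmxA.
Qed.

Lemma iformE (D D' : 'rV[int]_n) : (iform G D D')%:~R = qform G (toQ D) (toQ D').
Proof. by rewrite /qform /toQ map_trmx -!map_mxM [RHS]mxE. Qed.

Lemma iform0l (z : 'rV[int]_n) : iform G 0 z = 0.
Proof. by rewrite /iform !mul0mx mxE. Qed.

Lemma iformBl (x y z : 'rV[int]_n) : iform G (x - y) z = iform G x z - iform G y z.
Proof. by rewrite /iform !mulmxBl !mxE. Qed.

Lemma iformZl (k : int) (x z : 'rV[int]_n) : iform G (k *: x) z = k * iform G x z.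
Proof. by rewrite /iform -!scalemxAl !mxE. Qed.

Lemma qform_toQ_inj (w w' : 'rV[rat]_n) : \det G != 0 ->
  (forall D, qform G (toQ D) w = qform G (toQ D) w') -> w = w'.
Proof.
move=> detG_neq0 eq_w; apply/eqP; rewrite -subr_eq0 -trmx_eq0; apply/eqP.
have Gq_unit : map_mx (fun z : int => z%:~R : rat) G \in unitmx.
  by rewrite unitmxE unitfE det_map_mx intr_eq0.
have Gq_ker : map_mx (fun z : int => z%:~R) G *m (w - w')^T = 0.
  apply/matrixP => j i; rewrite (ord1 i) [RHS]mxE.
  have toQ_delta : toQ (delta_mx 0 j : 'rV[int]_n) = delta_mx 0 j.
    by apply/matrixP => a b; rewrite !mxE; case: (_ && _).
  transitivity (qform G (toQ (delta_mx 0 j)) (w - w')).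
    by rewrite toQ_delta /qform -mulmxA -rowE [RHS]mxE.
  by rewrite qformDr qformNr eq_w subrr.
by rewrite -(mulKmx Gq_unit (w - w')^T) Gq_ker mulmx0.
Qed.

End IntersectionForm.

Section LineThroughH.
Variables (n : nat) (G : 'M[int]_n) (H : 'rV[int]_n).
Hypotheses (G_sym : G^T = G) (detG_neq0 : \det G != 0).

Lemma qform_toQ_line (w : 'rV[rat]_n) (k : rat) :
  (forall D, qform G (toQ D) w = k * (iform G D H)%:~R) -> w = k *: toQ H.
Proof.
by move=> eq_w; apply: (qform_toQ_inj detG_neq0) => D; rewrite qformZr -iformE eq_w.
Qed.

Lemma Zc_line (x y : rat) (r : int) (D : 'rV[int]_n) (s : int) :
  Zc G (x *: toQ H) (y *: toQ H) r D s =
  (y * (iform G D H)%:~R - s%:~R + r%:~R * (x ^+ 2 - y ^+ 2) * (iform G H H)%:~R / 2,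
   x * (iform G D H)%:~R - r%:~R * x * y * (iform G H H)%:~R).
Proof.
rewrite /Zc !(qformDl, qformNl, qformZl, qformZr) !iformE.
rewrite (qformC G_sym (toQ H) (toQ D)).
by congr pair; [field | ring].
Qed.

Lemma Zc_twist_invariant_line (om be : 'rV[rat]_n) (a m c : int) :
  (forall D, Zc G om be 0 D 0 =
     Zc G om be (a * iform G D H) ((m * iform G D H) *: H - D) (c * iform G D H)) ->
  exists x y : rat, om = x *: toQ H /\ be = y *: toQ H.
Proof.
move=> inv.
exists ((m%:~R * qform G (toQ H) om - a%:~R * qform G be om) / 2).
exists ((m%:~R * qform G be (toQ H) - c%:~R
         + a%:~R * (qform G om om - qform G be be) / 2) / 2).
split; apply: qform_toQ_line => D; move: (inv D); rewrite /Zc => -[re im].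
- move: im; rewrite !(toQD, toQN, toQZ, qformDl, qformNl, qformZl) !intrM => im.
  lra.
- move: re; rewrite !(toQD, toQN, toQZ, qformDr, qformNr, qformZr) !intrM => re.
  rewrite qformC //; lra.
Qed.

End LineThroughH.

Theorem proposition6p2 (n : nat) (G : 'M[int]_n) (H : 'rV[int]_n)
    (ample : 'rV[rat]_n -> Prop) :
  K3_NS_data G H -> ample_axioms G H ample ->
  forall om be : 'rV[rat]_n, ample om ->
  ((forall (r : int) (D : 'rV[int]_n) (s : int),
      Zc G om be r D s =
      Zc G om be (- 4 * r - 5 * s - 2 * iform G D H)
                 ((2 * r + 2 * s + iform G D H) *: H - D)
                 (- 5 * r - 4 * s - 2 * iform G D H))
   <-> (om = 5%:R^-1 *: toQ H /\ be = - (2%:R / 5%:R) *: toQ H))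
  /\
  ((forall (r : int) (D : 'rV[int]_n) (s : int),
      Zc G om be r D s =
      Zc G om be (- 9 * r - 5 * s - 3 * iform G D H)
                 ((6 * r + 3 * s + 2 * iform G D H) *: H - D)
                 (- 20 * r - 9 * s - 6 * iform G D H))
   <-> (om = 5%:R^-1 *: toQ H /\ be = - (3%:R / 5%:R) *: toQ H)).
Proof.
move=> [G_sym [_ [detG_neq0 HH]]] [_ ample_pos] om be /ample_pos[_ omH_gt0].
split; split=> [inv | [-> ->] r D s].
2,4: by rewrite !(Zc_line _ G_sym) iformBl iformZl HH; congr pair; field.
- have [x [y [om_x be_y]]] : exists x y : rat, om = x *: toQ H /\ be = y *: toQ H.
    apply: (Zc_twist_invariant_line G_sym detG_neq0 (a := -2) (m := 1) (c := -2)) => D.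
    by rewrite inv !(mulr0, subr0, addr0, add0r, sub0r, mul1r) !mulNr.
  subst om be; move: omH_gt0 (inv 0 0 1).
  rewrite !(Zc_line _ G_sym) qformZl -iformE iformBl iformZl iform0l HH => xH_gt0 [re im].
  have y_val : y = - (2 / 5) by nra.
  have x_val : x = 5^-1 by subst y; nra.
  by rewrite x_val y_val.
- have [x [y [om_x be_y]]] : exists x y : rat, om = x *: toQ H /\ be = y *: toQ H.
    apply: (Zc_twist_invariant_line G_sym detG_neq0 (a := -3) (m := 2) (c := -6)) => D.
    by rewrite inv !(mulr0, subr0, addr0, add0r, sub0r) !mulNr.
  subst om be; move: omH_gt0 (inv 0 0 1).
  rewrite !(Zc_line _ G_sym) qformZl -iformE iformBl iformZl iform0l HH => xH_gt0 [re im].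
  have y_val : y = - (3 / 5) by nra.
  have x_val : x = 5^-1 by subst y; nra.
  by rewrite x_val y_val.
Qed.
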